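(* Let $G=(V,E)$ be a (finite or infinite) graph and $\psi:(0,+\infty)\to\mathbb R$ a $C^1$ concave function with $\psi'(1)=0$. Let $\sigma\in\mathbb R$ be a constant and $c:[0,+\infty)\to\mathbb R$ a continuous function such that either ($c\ge0$ and $\sigma\le1$) or ($c\le0$ and $\sigma\ge1$). Suppose $u:V\times[0,\infty)\to(0,\infty)$ is a positive solution of $\partial_tu=\Delta u+c(t)u^\sigma$ on $V$. Then, at every vertex and every time, $$\mathcal L(-u\Delta^\psi u)\ge 2u\Gamma_2^\psi(u)+c\,u^\sigma\Delta^\psi u,$$ where $\mathcal L=\Delta-\partial_t$.
   Context: Graphs: $G=(V,E)$ is a connected, locally finite graph; each edge $xy$ carries a weight $w_{xy}>0$ (possibly asymmetric), and $\mu:V\to(0,\infty)$ is a vertex measure; $y\sim x$ means $xy\in E$. Laplacian: $\Delta f(x)=\frac{1}{\mu(x)}\sum_{y\sim x}w_{xy}(f(y)-f(x))$. For $f:V\to(0,\infty)$: $\Delta^\psi f(x)=\Delta\big[\psi\big(\tfrac{f}{f(x)}\big)\big](x)$; $(\Omega^\psi f)(x)=\Delta\big[\psi'\big(\tfrac{f}{f(x)}\big)\tfrac{f}{f(x)}\big(\tfrac{\Delta f}{f}-\tfrac{\Delta f(x)}{f(x)}\big)\big](x)$; $2\Gamma_2^\psi(f)=\Omega^\psi f+\frac{\Delta f\,\Delta^\psi f}{f}-\frac{\Delta(f\Delta^\psi f)}{f}$. A positive solution is continuously differentiable in $t$, and all operators are applied to $u(\cdot,t)$ at each fixed time. *)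

From Stdlib Require Import Reals List Relations.
From Coquelicot Require Import Coquelicot.
Open Scope R_scope.

(* A graph on the vertex type V is given by its (finite, duplicate-free)
   neighbour lists: [In y (nbrs x)] means y ~ x, i.e. xy is an edge. *)

Definition adj {V : Type} (nbrs : V -> list V) (x y : V) : Prop := In y (nbrs x).

(* Standing assumptions: undirected simple graph, locally finite (finite
   neighbour lists), connected; positive (possibly asymmetric) edge weights
   w x y on edges; positive vertex measure mu. *)
Definition weighted_graph {V : Type} (nbrs : V -> list V)
  (w : V -> V -> R) (mu : V -> R) : Prop :=
  (forall x, NoDup (nbrs x)) /\
  (forall x y, In y (nbrs x) <-> In x (nbrs y)) /\
  (forall x, ~ In x (nbrs x)) /\
  (forall x y, clos_refl_trans V (adj nbrs) x y) /\
  (forall x y, In y (nbrs x) -> 0 < w x y) /\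
  (forall x, 0 < mu x).

Definition Lap {V : Type} (nbrs : V -> list V) (w : V -> V -> R) (mu : V -> R)
  (f : V -> R) (x : V) : R :=
  / mu x * fold_right Rplus 0 (map (fun y => w x y * (f y - f x)) (nbrs x)).

Definition Lap_psi {V : Type} nbrs w mu (psi : R -> R) (f : V -> R) (x : V) : R :=
  Lap nbrs w mu (fun y => psi (f y / f x)) x.

Definition Omega_psi {V : Type} nbrs w mu (dpsi : R -> R) (f : V -> R) (x : V) : R :=
  Lap nbrs w mu
    (fun y => dpsi (f y / f x) * (f y / f x) *
              (Lap nbrs w mu f y / f y - Lap nbrs w mu f x / f x)) x.

Definition Gamma2_psi {V : Type} nbrs w mu (psi dpsi : R -> R) (f : V -> R) (x : V) : R :=
  / 2 * (Omega_psi nbrs w mu dpsi f x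
         + Lap nbrs w mu f x * Lap_psi nbrs w mu psi f x / f x
         - Lap nbrs w mu (fun y => f y * Lap_psi nbrs w mu psi f y) x / f x).

(* [deriv_half g t d]: g has derivative d at t relative to [0,+oo)
   (two-sided for t > 0, right derivative at t = 0). *)
Definition deriv_half (g : R -> R) (t d : R) : Prop :=
  filterlim (fun s => (g s - g t) / (s - t))
    (within (fun s => 0 <= s /\ s <> t) (locally t)) (locally d).

Definition cont_half (g : R -> R) (t : R) : Prop :=
  filterlim g (within (fun s => 0 <= s) (locally t)) (locally (g t)).

(* Differentiating [Delta^psi u] in time gives [Omega^psi] with [d_t u] in place of [Delta u].
   Since [d_t u = Delta u + c u^sigma], this is [Omega^psi u] plus the same expression for the
   reaction velocity [c u^sigma], and everything else cancels exactly against
   [2 u Gamma_2^psi(u) + c u^sigma Delta^psi u], leaving [u(x)] times the Laplacian at [x] of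
   [y |-> psi'(u_y/u_x) (u_y/u_x) c (u_y^(sigma-1) - u_x^(sigma-1))].
   That function vanishes at [x] and is nonnegative elsewhere: concavity and [psi'(1) = 0] give
   [psi'(r) (1 - r) >= 0], and [c (sigma - 1) <= 0] makes [c (u_y^(sigma-1) - u_x^(sigma-1))]
   have the sign of [u_x - u_y]. *)

From Stdlib Require Import Reals List Relations Lra.
From Coquelicot Require Import Coquelicot.
Open Scope R_scope.

Definition near_half (t : R) := within (fun s => 0 <= s /\ s <> t) (locally t).

#[global] Instance near_half_filter t : Filter (near_half t).
Proof. apply within_filter, locally_filter. Qed.

Lemma near_half_forall t (P : R -> Prop) :
  (forall s, 0 <= s -> s <> t -> P s) -> near_half t P.
Proof.
  intros HP. unfold near_half, within. apply filter_forall. intros s [Hs Hst]. auto.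
Qed.

Lemma filterlim_Rplus {T} {F : (T -> Prop) -> Prop} {FF : Filter F} (f g : T -> R) a b :
  filterlim f F (locally a) -> filterlim g F (locally b) ->
  filterlim (fun s => f s + g s) F (locally (a + b)).
Proof.
  intros Hf Hg. eapply filterlim_comp_2; [exact Hf | exact Hg |].
  apply (filterlim_plus (K := R_AbsRing) (V := R_NormedModule)).
Qed.

Lemma filterlim_Rmult {T} {F : (T -> Prop) -> Prop} {FF : Filter F} (f g : T -> R) a b :
  filterlim f F (locally a) -> filterlim g F (locally b) ->
  filterlim (fun s => f s * g s) F (locally (a * b)).
Proof.
  intros Hf Hg. eapply filterlim_comp_2; [exact Hf | exact Hg |].
  apply (filterlim_mult (K := R_AbsRing)).
Qed.

Lemma deriv_half_continuous g t d : deriv_half g t d ->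
  filterlim g (near_half t) (locally (g t)).
Proof.
  intros Hg.
  apply filterlim_ext_loc with (fun s => g t + (g s - g t) / (s - t) * (s - t)).
  { apply near_half_forall. intros s _ Hs. field. lra. }
  replace (locally (g t)) with (locally (g t + d * (t + - t))) by (f_equal; ring).
  apply filterlim_Rplus; [apply filterlim_const |].
  apply filterlim_Rmult; [exact Hg |].
  apply filterlim_Rplus; [| apply filterlim_const].
  intros P HP. unfold filtermap, near_half, within. apply filter_imp with P; auto.
Qed.

Lemma deriv_half_const k t : deriv_half (fun _ => k) t 0.
Proof.
  apply filterlim_ext_loc with (fun _ => 0); [| apply filterlim_const].
  apply near_half_forall. intros s _ Hs. field. lra.
Qed.

Lemma deriv_half_plus f g t df dg : deriv_half f t df -> deriv_half g t dg ->
  deriv_half (fun s => f s + g s) t (df + dg).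
Proof.
  intros Hf Hg.
  apply filterlim_ext_loc with (fun s => (f s - f t) / (s - t) + (g s - g t) / (s - t)).
  - apply near_half_forall. intros s _ Hs. field. lra.
  - now apply filterlim_Rplus.
Qed.

Lemma deriv_half_mult f g t df dg : deriv_half f t df -> deriv_half g t dg ->
  deriv_half (fun s => f s * g s) t (df * g t + f t * dg).
Proof.
  intros Hf Hg.
  apply filterlim_ext_loc
    with (fun s => (f s - f t) / (s - t) * g s + f t * ((g s - g t) / (s - t))).
  - apply near_half_forall. intros s _ Hs. field. lra.
  - apply filterlim_Rplus; apply filterlim_Rmult; try assumption.
    + exact (deriv_half_continuous g t dg Hg).
    + apply filterlim_const.
Qed.

Lemma deriv_half_scal k f t d : deriv_half f t d ->
  deriv_half (fun s => k * f s) t (k * d).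
Proof.
  intros Hf. replace (k * d) with (0 * f t + k * d) by ring.
  exact (deriv_half_mult _ _ t _ _ (deriv_half_const k t) Hf).
Qed.

Lemma deriv_half_minus f g t df dg : deriv_half f t df -> deriv_half g t dg ->
  deriv_half (fun s => f s - g s) t (df - dg).
Proof.
  intros Hf Hg.
  apply filterlim_ext_loc with (fun s => (f s - f t) / (s - t) + -1 * ((g s - g t) / (s - t))).
  - apply near_half_forall. intros s _ Hs. field. lra.
  - replace (df - dg) with (df + -1 * dg) by ring.
    apply filterlim_Rplus; [exact Hf |].
    apply filterlim_Rmult; [apply filterlim_const | exact Hg].
Qed.

Lemma deriv_half_opp f t d : deriv_half f t d -> deriv_half (fun s => - f s) t (- d).
Proof.
  intros Hf.
  apply filterlim_ext_loc with (fun s => -1 * ((f s - f t) / (s - t))).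
  - apply near_half_forall. intros s _ Hs. field. lra.
  - replace (- d) with (-1 * d) by ring.
    apply filterlim_Rmult; [apply filterlim_const | exact Hf].
Qed.

Lemma slope_continuous (phi : R -> R) z d : is_derive phi z d ->
  filterlim (fun y => if Req_EM_T y z then d else (phi y - phi z) / (y - z))
    (locally z) (locally d).
Proof.
  intros Hphi. apply is_derive_Reals in Hphi.
  apply filterlim_locally. intros eps.
  destruct (Hphi eps (cond_pos eps)) as [delta Hdelta].
  exists delta. intros y Hy. change (Rabs (y - z) < delta) in Hy.
  change (Rabs ((if Req_EM_T y z then d else (phi y - phi z) / (y - z)) - d) < eps).
  destruct (Req_EM_T y z) as [-> | Hyz].
  - rewrite Rminus_eq_0, Rabs_R0. apply cond_pos.
  - specialize (Hdelta (y - z)). rewrite Rplus_minus in Hdelta.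
    apply Hdelta; [lra | exact Hy].
Qed.

Lemma deriv_half_comp (phi a : R -> R) t da dphi :
  deriv_half a t da -> is_derive phi (a t) dphi ->
  deriv_half (fun s => phi (a s)) t (dphi * da).
Proof.
  intros Ha Hphi.
  set (Q := fun y => if Req_EM_T y (a t) then dphi else (phi y - phi (a t)) / (y - a t)).
  apply filterlim_ext_loc with (fun s => Q (a s) * ((a s - a t) / (s - t))).
  - apply near_half_forall. intros s _ Hs. unfold Q.
    destruct (Req_EM_T (a s) (a t)) as [E | E].
    + rewrite E, Rminus_eq_0. field. lra.
    + field. split; lra.
  - apply filterlim_Rmult; [| exact Ha].
    eapply filterlim_comp; [exact (deriv_half_continuous a t da Ha) |].
    exact (slope_continuous phi (a t) dphi Hphi).
Qed.

Lemma deriv_half_div f g t df dg : g t <> 0 ->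
  deriv_half f t df -> deriv_half g t dg ->
  deriv_half (fun s => f s / g s) t ((df * g t - f t * dg) / g t ^ 2).
Proof.
  intros Hg0 Hf Hg.
  assert (Hinv : is_derive Rinv (g t) (- / g t ^ 2)).
  { auto_derive; [exact Hg0 | field; exact Hg0]. }
  replace ((df * g t - f t * dg) / g t ^ 2) with (df * / g t + f t * (- / g t ^ 2 * dg))
    by (field; exact Hg0).
  exact (deriv_half_mult f _ t df _ Hf (deriv_half_comp Rinv g t dg _ Hg Hinv)).
Qed.

Lemma deriv_half_sum {A : Type} (l : list A) (F : A -> R -> R) (dF : A -> R) t :
  (forall y, In y l -> deriv_half (F y) t (dF y)) ->
  deriv_half (fun s => fold_right Rplus 0 (map (fun y => F y s) l)) t
    (fold_right Rplus 0 (map dF l)).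
Proof.
  induction l as [| y l IH]; intros HF; simpl.
  - apply deriv_half_const.
  - apply deriv_half_plus; [apply HF; now left | apply IH; intros; apply HF; now right].
Qed.

Lemma deriv_half_Lap {V : Type} nbrs w mu (F : V -> R -> R) (dF : V -> R) x t :
  (forall y, deriv_half (F y) t (dF y)) ->
  deriv_half (fun s => Lap nbrs w mu (fun y => F y s) x) t (Lap nbrs w mu dF x).
Proof.
  intros HF. apply deriv_half_scal, deriv_half_sum. intros y _.
  apply deriv_half_scal, deriv_half_minus; apply HF.
Qed.

Section Laplacian.
Context {V : Type} (nbrs : V -> list V) (w : V -> V -> R) (mu : V -> R).

Lemma Lap_ext f g x : (forall y, f y = g y) -> Lap nbrs w mu f x = Lap nbrs w mu g x.
Proof.
  intros Hfg. unfold Lap. do 2 f_equal. apply map_ext. intros y. now rewrite !Hfg.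
Qed.

Lemma Lap_plus f g x :
  Lap nbrs w mu (fun y => f y + g y) x = Lap nbrs w mu f x + Lap nbrs w mu g x.
Proof.
  unfold Lap. rewrite <- Rmult_plus_distr_l. f_equal.
  induction (nbrs x) as [| y l IH]; simpl; [ring | rewrite IH; ring].
Qed.

Lemma Lap_opp f x : Lap nbrs w mu (fun y => - f y) x = - Lap nbrs w mu f x.
Proof.
  unfold Lap. rewrite Ropp_mult_distr_r. f_equal.
  induction (nbrs x) as [| y l IH]; simpl; [ring | rewrite IH; ring].
Qed.

Lemma Lap_ge0_at_min f x :
  (forall y, In y (nbrs x) -> 0 < w x y) -> 0 < mu x ->
  (forall y, In y (nbrs x) -> f x <= f y) -> 0 <= Lap nbrs w mu f x.
Proof.
  intros Hw Hmu Hmin. unfold Lap.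
  apply Rmult_le_pos; [now apply Rlt_le, Rinv_0_lt_compat |].
  revert Hw Hmin. generalize (nbrs x) as l.
  induction l as [| y l IH]; simpl; intros Hw Hmin; [lra |].
  apply Rplus_le_le_0_compat.
  - apply Rmult_le_pos; [apply Rlt_le, Hw | apply Rge_le, Rge_minus, Rle_ge, Hmin]; now left.
  - apply IH; intros z Hz; [apply Hw | apply Hmin]; now right.
Qed.

Definition Omega_psi_along (dpsi : R -> R) (f v : V -> R) (x : V) : R :=
  Lap nbrs w mu (fun y => dpsi (f y / f x) * (f y / f x) * (v y / f y - v x / f x)) x.

Lemma Omega_psi_along_Lap dpsi f x :
  Omega_psi_along dpsi f (Lap nbrs w mu f) x = Omega_psi nbrs w mu dpsi f x.
Proof. reflexivity. Qed.

Lemma Omega_psi_along_plus dpsi f v1 v2 x :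
  Omega_psi_along dpsi f (fun y => v1 y + v2 y) x
  = Omega_psi_along dpsi f v1 x + Omega_psi_along dpsi f v2 x.
Proof. unfold Omega_psi_along. rewrite <- Lap_plus. apply Lap_ext. intros y. unfold Rdiv. ring. Qed.

End Laplacian.

Lemma is_derive_ge_of_right_slopes (g : R -> R) z d m : is_derive g z d ->
  (forall h, 0 < h <= 1 -> m <= (g (z + h) - g z) / h) -> m <= d.
Proof.
  intros Hg Hslope. apply is_derive_Reals in Hg.
  apply Rnot_lt_le. intros Hdm.
  destruct (Hg (m - d) ltac:(lra)) as [delta Hdelta].
  set (h := Rmin 1 (delta / 2)).
  assert (Hh : 0 < h <= 1).
  { pose proof (cond_pos delta). split; [apply Rmin_glb_lt; lra | apply Rmin_l]. }
  assert (Hhdelta : Rabs h < delta).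
  { pose proof (cond_pos delta). assert (h <= delta / 2) by apply Rmin_r.
    rewrite Rabs_pos_eq; lra. }
  specialize (Hdelta h ltac:(lra) Hhdelta). specialize (Hslope h Hh).
  apply Rabs_def2 in Hdelta. lra.
Qed.

Lemma Rpower_div_self x s : 0 < x -> Rpower x s / x = Rpower x (s - 1).
Proof.
  intros Hx. replace s with ((s - 1) + 1) at 1 by ring.
  rewrite Rpower_plus, Rpower_1 by exact Hx. field. lra.
Qed.

Lemma Rpower_sub_mul_sub_ge0 a b e : 0 < a -> 0 < b ->
  0 <= e * ((Rpower b e - Rpower a e) * (b - a)).
Proof.
  intros Ha Hb. unfold Rpower.
  assert (Hexp : forall p q, p <= q -> exp p <= exp q).
  { intros p q [Hpq | ->]; [now apply Rlt_le, exp_increasing | apply Rle_refl]. }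
  assert (Hln : forall p q, 0 < p <= q -> 0 <= e * ((exp (e * ln q) - exp (e * ln p)) * (q - p))).
  { intros p q [Hp Hpq]. pose proof (ln_le p q Hp Hpq). destruct (Rle_or_lt 0 e).
    - assert (exp (e * ln p) <= exp (e * ln q)) by (apply Hexp; nra).
      apply Rmult_le_pos; [lra | apply Rmult_le_pos; lra].
    - assert (exp (e * ln q) <= exp (e * ln p)) by (apply Hexp; nra).
      replace (e * ((exp (e * ln q) - exp (e * ln p)) * (q - p)))
        with ((- e) * ((exp (e * ln p) - exp (e * ln q)) * (q - p))) by ring.
      apply Rmult_le_pos; [lra | apply Rmult_le_pos; lra]. }
  destruct (Rle_or_lt a b) as [Hab | Hab].
  - apply Hln; lra.
  - replace (e * ((exp (e * ln b) - exp (e * ln a)) * (b - a)))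
      with (e * ((exp (e * ln a) - exp (e * ln b)) * (a - b))) by ring.
    apply Hln; lra.
Qed.

Section ConcaveFunction.
Variables psi dpsi : R -> R.
Hypothesis psi_deriv : forall s, 0 < s -> is_derive psi s (dpsi s).
Hypothesis psi_concave : forall a b l, 0 < a -> 0 < b -> 0 <= l <= 1 ->
  l * psi a + (1 - l) * psi b <= psi (l * a + (1 - l) * b).
Hypothesis dpsi_1 : dpsi 1 = 0.

Lemma concave_tangent_ge a b : 0 < a -> 0 < b -> psi b <= psi a + dpsi a * (b - a).
Proof.
  intros Ha Hb.
  assert (Hd : is_derive (fun h => psi (a + h * (b - a))) 0 ((b - a) * dpsi a)).
  { apply (is_derive_comp psi (fun h => a + h * (b - a))).
    - replace (a + 0 * (b - a)) with a by ring. now apply psi_deriv.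
    - auto_derive; [easy | ring]. }
  enough (psi b - psi a <= (b - a) * dpsi a) by lra.
  apply (is_derive_ge_of_right_slopes _ 0 _ _ Hd). intros h Hh.
  pose proof (psi_concave b a h Hb Ha ltac:(lra)) as Hchord.
  replace (h * b + (1 - h) * a) with (a + (0 + h) * (b - a)) in Hchord by ring.
  replace (a + 0 * (b - a)) with a by ring.
  replace (psi b - psi a) with (h * (psi b - psi a) / h) by (field; lra).
  unfold Rdiv. apply Rmult_le_compat_r; [apply Rlt_le, Rinv_0_lt_compat |]; lra.
Qed.

(* Tangents at [r] and at [1] (where the slope vanishes) sandwich [psi r - psi 1]. *)
Lemma concave_deriv_mul_one_sub_ge0 r : 0 < r -> 0 <= dpsi r * (1 - r).
Proof.
  intros Hr.
  pose proof (concave_tangent_ge r 1 Hr ltac:(lra)).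
  pose proof (concave_tangent_ge 1 r ltac:(lra) Hr).
  nra.
Qed.

(* Both [dpsi (b / a)] and [c * (b ^ (sigma - 1) - a ^ (sigma - 1))] have the sign of [a - b]. *)
Lemma reaction_term_ge0 c sigma a b : c * (sigma - 1) <= 0 -> 0 < a -> 0 < b ->
  0 <= dpsi (b / a) * (b / a) * (c * Rpower b sigma / b - c * Rpower a sigma / a).
Proof.
  intros Hc Ha Hb.
  replace (c * Rpower b sigma / b - c * Rpower a sigma / a)
    with (c * (Rpower b (sigma - 1) - Rpower a (sigma - 1)))
    by (rewrite <- !Rpower_div_self by assumption; unfold Rdiv; ring).
  set (e := sigma - 1) in *. set (X := Rpower b e - Rpower a e). set (r := b / a).
  assert (Hr : 0 < r) by (apply Rdiv_lt_0_compat; assumption).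
  assert (Hpsi : 0 <= dpsi r * (a - b)).
  { replace (dpsi r * (a - b)) with (a * (dpsi r * (1 - r))) by (unfold r; field; lra).
    apply Rmult_le_pos; [lra | now apply concave_deriv_mul_one_sub_ge0]. }
  assert (HX : 0 <= e * (X * (b - a))) by now apply Rpower_sub_mul_sub_ge0.
  destruct (Req_dec (e * (a - b)) 0) as [Hdeg | Hdeg].
  - assert (HX0 : X = 0).
    { apply Rmult_integral in Hdeg as [He | Hab]; unfold X.
      + rewrite He, !Rpower_O by assumption. ring.
      + replace b with a by lra. ring. }
    rewrite HX0. lra.
  - assert (Hsq : 0 < (e * (a - b)) ^ 2) by (rewrite <- Rsqr_pow2; now apply Rsqr_pos_lt).
    assert (Hprod : 0 <= dpsi r * (c * X) * (e * (a - b)) ^ 2).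
    { replace (dpsi r * (c * X) * (e * (a - b)) ^ 2)
        with (dpsi r * (a - b) * (- (c * e)) * (e * (X * (b - a)))) by ring.
      apply Rmult_le_pos; [apply Rmult_le_pos |]; lra. }
    replace (dpsi r * r * (c * X)) with (r * (dpsi r * (c * X))) by ring.
    apply Rmult_le_pos; [lra |]. nra.
Qed.

Lemma Omega_psi_along_reaction_ge0 {V : Type} nbrs w mu (f : V -> R) c sigma x :
  (forall y, In y (nbrs x) -> 0 < w x y) -> 0 < mu x ->
  (forall y, 0 < f y) -> c * (sigma - 1) <= 0 ->
  0 <= Omega_psi_along nbrs w mu dpsi f (fun y => c * Rpower (f y) sigma) x.
Proof.
  intros Hw Hmu Hf Hc. apply Lap_ge0_at_min; auto. intros y _.
  replace (dpsi (f x / f x) * (f x / f x) *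
             (c * Rpower (f x) sigma / f x - c * Rpower (f x) sigma / f x)) with 0
    by (unfold Rdiv; ring).
  now apply reaction_term_ge0.
Qed.

End ConcaveFunction.

Lemma deriv_half_Lap_psi {V : Type} nbrs w mu (psi dpsi : R -> R) (u : V -> R -> R)
  (du : V -> R) x t :
  (forall s, 0 < s -> is_derive psi s (dpsi s)) ->
  (forall y, 0 < u y t) -> (forall y, deriv_half (u y) t (du y)) ->
  deriv_half (fun s => Lap_psi nbrs w mu psi (fun y => u y s) x) t
    (Omega_psi_along nbrs w mu dpsi (fun y => u y t) du x).
Proof.
  intros Hpsi Hu Hdu. apply deriv_half_Lap. intros y.
  pose proof (Hu x). pose proof (Hu y).
  replace (dpsi (u y t / u x t) * (u y t / u x t) * (du y / u y t - du x / u x t))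
    with (dpsi (u y t / u x t) * ((du y * u x t - u y t * du x) / u x t ^ 2))
    by (field; lra).
  apply (deriv_half_comp psi (fun s => u y s / u x s)).
  - apply deriv_half_div; [lra | apply Hdu | apply Hdu].
  - apply Hpsi, Rdiv_lt_0_compat; assumption.
Qed.

Theorem mainTheorem11
  (V : Type) (nbrs : V -> list V) (w : V -> V -> R) (mu : V -> R)
  (Hgraph : weighted_graph nbrs w mu)
  (psi dpsi : R -> R)
  (Hpsi_deriv : forall s, 0 < s -> is_derive psi s (dpsi s))
  (Hpsi_C1 : forall s, 0 < s -> continuous dpsi s)
  (Hpsi_concave : forall a b l, 0 < a -> 0 < b -> 0 <= l <= 1 ->
      l * psi a + (1 - l) * psi b <= psi (l * a + (1 - l) * b))
  (Hpsi1 : dpsi 1 = 0)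
  (sigma : R) (c : R -> R)
  (Hc_cont : forall t, 0 <= t -> cont_half c t)
  (Hsign : ((forall t, 0 <= t -> 0 <= c t) /\ sigma <= 1) \/
           ((forall t, 0 <= t -> c t <= 0) /\ 1 <= sigma))
  (u du : V -> R -> R)
  (Hu_pos : forall x t, 0 <= t -> 0 < u x t)
  (Hu_deriv : forall x t, 0 <= t -> deriv_half (u x) t (du x t))
  (Hu_C1 : forall x t, 0 <= t -> cont_half (du x) t)
  (Hu_eq : forall x t, 0 <= t ->
      du x t = Lap nbrs w mu (fun y => u y t) x + c t * Rpower (u x t) sigma) :
  forall (x : V) (t : R), 0 <= t ->
    exists D : R,
      deriv_half (fun s => - u x s * Lap_psi nbrs w mu psi (fun y => u y s) x) t D /\
      Lap nbrs w mu (fun y => - u y t * Lap_psi nbrs w mu psi (fun z => u z t) y) x - D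
      >= 2 * u x t * Gamma2_psi nbrs w mu psi dpsi (fun y => u y t) x
         + c t * Rpower (u x t) sigma * Lap_psi nbrs w mu psi (fun y => u y t) x.
Proof.
  intros x t Ht. destruct Hgraph as (_ & _ & _ & _ & Hw & Hmu).
  assert (Hux : 0 < u x t) by auto.
  set (reaction := fun y => c t * Rpower (u y t) sigma).
  set (Dpsi := Omega_psi_along nbrs w mu dpsi (fun y => u y t) (fun y => du y t) x).
  exists (- du x t * Lap_psi nbrs w mu psi (fun y => u y t) x + - u x t * Dpsi).
  split.
  { apply (deriv_half_mult (fun s => - u x s)
             (fun s => Lap_psi nbrs w mu psi (fun y => u y s) x));
      [now apply deriv_half_opp, Hu_deriv |].
    apply deriv_half_Lap_psi; auto. }
  assert (Hsplit : Dpsi = Omega_psi nbrs w mu dpsi (fun y => u y t) x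
                          + Omega_psi_along nbrs w mu dpsi (fun y => u y t) reaction x).
  { rewrite <- Omega_psi_along_Lap, <- Omega_psi_along_plus.
    apply Lap_ext. intros y. now rewrite !(Hu_eq _ t Ht). }
  assert (Hreaction : 0 <= Omega_psi_along nbrs w mu dpsi (fun y => u y t) reaction x).
  { apply (Omega_psi_along_reaction_ge0 psi dpsi Hpsi_deriv Hpsi_concave Hpsi1); auto.
    destruct Hsign as [[Hc Hs] | [Hc Hs]]; specialize (Hc t Ht); nra. }
  rewrite (Lap_ext nbrs w mu _
    (fun y => - (u y t * Lap_psi nbrs w mu psi (fun z => u z t) y))) by (intros; ring).
  rewrite Lap_opp, Hsplit. unfold Gamma2_psi. rewrite (Hu_eq x t Ht).
  apply Rminus_ge.
  match goal with
  | |- ?gap >= 0 => replace gap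
      with (u x t * Omega_psi_along nbrs w mu dpsi (fun y => u y t) reaction x)
      by (field; lra)
  end.
  apply Rle_ge, Rmult_le_pos; lra.
Qed.
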